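(* Let $K$ be a compact convex subset of $\mathbb{R}^N$ and $f:K\to\mathbb{R}$ a function. Let $\mathbf{x}_1,\dots,\mathbf{x}_m,\mathbf{y}_1,\dots,\mathbf{y}_n\in K$ and let $\lambda_1,\dots,\lambda_m>0$, $\mu_1,\dots,\mu_n>0$, so that $\sum_{i=1}^m\lambda_i\delta_{\mathbf{x}_i}$ and $\sum_{j=1}^n\mu_j\delta_{\mathbf{y}_j}$ are positive discrete measures concentrated at points of $K$. Suppose that each $\mathbf{x}_i$ ($i=1,\dots,m$) is a point of convexity of $f$ relative to $K$, and that $$\sum_{i=1}^m\lambda_i\delta_{\mathbf{x}_i}\prec\sum_{j=1}^n\mu_j\delta_{\mathbf{y}_j}.$$ Then $$\sum_{i=1}^m\lambda_i f(\mathbf{x}_i)\le\sum_{j=1}^n\mu_j f(\mathbf{y}_j).$$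
   Context: $\delta_{\mathbf{x}}$ denotes the Dirac measure at $\mathbf{x}$. The relation $\sum_{i=1}^m\lambda_i\delta_{\mathbf{x}_i}\prec\sum_{j=1}^n\mu_j\delta_{\mathbf{y}_j}$ means that there exists an $m\times n$ real matrix $A=(a_{ij})$ such that $a_{ij}\ge0$ for all $i,j$; $\sum_{j=1}^n a_{ij}=1$ for $i=1,\dots,m$; $\mu_j=\sum_{i=1}^m a_{ij}\lambda_i$ for $j=1,\dots,n$; and $\mathbf{x}_i=\sum_{j=1}^n a_{ij}\mathbf{y}_j$ for $i=1,\dots,m$. A point $a\in K$ is a point of convexity of $f$ relative to a convex set $V\subseteq K$ if $a\in V$ and $f(a)\le\sum_{k=1}^n\lambda_k f(x_k)$ for every finite family of points $x_1,\dots,x_n\in V$ and positive weights $\lambda_1,\dots,\lambda_n$ with $\sum_k\lambda_k=1$ and $\sum_k\lambda_k x_k=a$. *)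

From HB Require Import structures.
From mathcomp Require Import all_boot all_order all_algebra.
From mathcomp Require Import all_classical all_reals topology normedtype.
Set Implicit Arguments. Unset Strict Implicit. Unset Printing Implicit Defensive.
Import Order.TTheory GRing.Theory Num.Theory.
Import numFieldNormedType.Exports.
Local Open Scope classical_set_scope.
Local Open Scope ring_scope.

Definition convex_set (R : realType) (N : nat) (V : set 'rV[R]_N) : Prop :=
  forall x y t, V x -> V y -> 0 <= t -> t <= 1 -> V (t *: x + (1 - t) *: y).

Definition point_of_convexity (R : realType) (N : nat)
    (f : 'rV[R]_N -> R) (V : set 'rV[R]_N) (a : 'rV[R]_N) : Prop :=
  V a /\
  forall (n : nat) (x : 'I_n -> 'rV[R]_N) (lam : 'I_n -> R),
    (forall k, V (x k)) -> (forall k, 0 < lam k) ->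
    \sum_(k < n) lam k = 1 -> \sum_(k < n) lam k *: x k = a ->
    f a <= \sum_(k < n) lam k * f (x k).

Definition discrete_prec (R : realType) (N m n : nat)
    (lam : 'I_m -> R) (x : 'I_m -> 'rV[R]_N)
    (mu : 'I_n -> R) (y : 'I_n -> 'rV[R]_N) : Prop :=
  exists A : 'M[R]_(m, n),
    [/\ forall i j, 0 <= A i j,
        forall i, \sum_(j < n) A i j = 1,
        forall j, mu j = \sum_(i < m) A i j * lam i
      & forall i, x i = \sum_(j < n) A i j *: y j].

(* Row i of the matrix A exhibits x_i as a barycentre of the y_j, so convexity at x_i gives
   f(x_i) <= sum_j A_ij f(y_j).  Multiplying by lam_i, summing over i and exchanging the
   sums turns the right-hand side into sum_j mu_j f(y_j). *)

From HB Require Import structures.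
From mathcomp Require Import all_boot all_order all_algebra.
From mathcomp Require Import all_classical all_reals topology normedtype.
Import Order.TTheory GRing.Theory Num.Theory.
Import numFieldNormedType.Exports.
Local Open Scope classical_set_scope.
Local Open Scope ring_scope.

Lemma big_ord_support {V : nmodType} {n : nat} (P : {pred 'I_n}) (F : 'I_n -> V) :
  (forall j, j \notin P -> F j = 0) ->
  \sum_(j < n) F j = \sum_(k < #|P|) F (enum_val k).
Proof.
move=> F0; rewrite -(big_enum_val (A := P)) /= [LHS](bigID (mem P)) /=.
by rewrite [X in _ + X]big1 ?addr0.
Qed.

(* The definition only allows positive weights; the zero weights are dropped first. *)
Lemma point_of_convexity_le (R : realType) (N : nat) (K : set 'rV[R]_N)
    (f : 'rV[R]_N -> R) (n : nat) (y : 'I_n -> 'rV[R]_N) (w : 'I_n -> R) a :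
  point_of_convexity f K a -> (forall j, K (y j)) -> (forall j, 0 <= w j) ->
  \sum_(j < n) w j = 1 -> \sum_(j < n) w j *: y j = a ->
  f a <= \sum_(j < n) w j * f (y j).
Proof.
move=> [_ convex_a] Ky w_ge0 w_sum1 w_bary.
pose S : {pred 'I_n} := [pred j | 0 < w j].
have sum_S (V : nmodType) (F : 'I_n -> V) : (forall j, w j = 0 -> F j = 0) ->
    \sum_(j < n) F j = \sum_(k < #|S|) F (enum_val k).
  move=> F0; apply: big_ord_support => j; rewrite inE -leNgt => w_le0.
  by apply: F0; apply/eqP; rewrite eq_le w_le0 w_ge0.
rewrite (sum_S _ (fun j => w j * f (y j))); last by move=> j ->; rewrite mul0r.
apply: convex_a => [k | k | | ].
- exact: Ky.
- exact: (enum_valP k).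
- by rewrite -w_sum1 (sum_S _ w).
- by rewrite -w_bary (sum_S _ (fun j => w j *: y j)) // => j ->; rewrite scale0r.
Qed.

Theorem theorem2 (R : realType) (N : nat) (K : set 'rV[R]_N)
    (f : 'rV[R]_N -> R) (m n : nat)
    (x : 'I_m -> 'rV[R]_N) (y : 'I_n -> 'rV[R]_N)
    (lam : 'I_m -> R) (mu : 'I_n -> R) :
  compact K -> convex_set K ->
  (forall i, K (x i)) -> (forall j, K (y j)) ->
  (forall i, 0 < lam i) -> (forall j, 0 < mu j) ->
  (forall i, point_of_convexity f K (x i)) ->
  discrete_prec lam x mu y ->
  \sum_(i < m) lam i * f (x i) <= \sum_(j < n) mu j * f (y j).
Proof.
move=> _ _ _ Ky lam_gt0 _ convex_x [A [A_ge0 A_sum1 A_mu A_x]].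
have rows_le i : f (x i) <= \sum_(j < n) A i j * f (y j).
  exact: point_of_convexity_le (convex_x i) Ky (A_ge0 i) (A_sum1 i) (esym (A_x i)).
have exchange : \sum_(i < m) lam i * \sum_(j < n) A i j * f (y j)
                = \sum_(j < n) mu j * f (y j).
  under eq_bigr => i _ do rewrite big_distrr /=.
  rewrite exchange_big /=; apply: eq_bigr => j _.
  by rewrite A_mu big_distrl /=; apply: eq_bigr => i _; rewrite mulrCA mulrA.
rewrite -exchange; apply: ler_sum => i _.
by rewrite ler_pM2l.
Qed.
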